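(* The $3N$ functions $E_m^{(k)}$ ($k=1,2,3$; $m=0,1,\dots,N-1$) are functionally independent on a dense open subset of $\mathbb R^{6N}$; that is, there is a dense open subset of $\mathbb R^{6N}$ at every point of which the Jacobian matrix of $(E_0^{(1)},\dots,E_{N-1}^{(1)},E_0^{(2)},\dots,E_{N-1}^{(2)},E_0^{(3)},\dots,E_{N-1}^{(3)})$ with respect to the $6N$ real coordinates $(\operatorname{Re}\phi_{j\alpha},\operatorname{Im}\phi_{j\alpha})$ has rank $3N$.
   Context: Fix $N\ge1$ and distinct nonzero real $\lambda_1,\dots,\lambda_N$. Phase space $\mathbb C^{3N}\cong\mathbb R^{6N}$ with complex coordinates $\phi_{j\alpha}$ ($j=1,2,3$, $\alpha=1,\dots,N$). $L(\lambda)=C+\sum_\alpha(\lambda-\lambda_\alpha)^{-1}F_\alpha F_\alpha^*$ with $C=\operatorname{diag}(1,-1,0)$, $F_\alpha=(\phi_{1\alpha},\phi_{2\alpha},\phi_{3\alpha})^T$. Define $p_1,p_2,p_3$ by $\det(\xi I-L(\lambda))=\xi^3-p_1(\lambda)\xi^2+p_2(\lambda)\xi-p_3(\lambda)$, and $E_m^{(k)}$ by the Laurent expansion $p_k(\lambda)=\sum_{m=-1}^\infty E_m^{(k)}\lambda^{-m-1}$ for $|\lambda|>\max_\alpha|\lambda_\alpha|$. Each $E_m^{(k)}$ is a real-valued polynomial function of $\phi_{j\alpha},\bar\phi_{j\alpha}$. *)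

From mathcomp Require Import all_boot all_order all_algebra.
From mathcomp Require Import complex.
From mathcomp Require Import all_classical all_reals all_analysis.
From mathcomp Require Import zify.
Set Implicit Arguments. Unset Strict Implicit. Unset Printing Implicit Defensive.
Import Order.TTheory GRing.Theory Num.Theory.
Local Open Scope ring_scope.

(* Real coordinate index of (Re phi_{j a}) (b = 0) and (Im phi_{j a}) (b = 1)
   in R^{6N}: value b + 2*(a + N*j). This is a bijection 'I_3*'I_N*'I_2 -> 'I_(6N). *)
Lemma coord_idx_lt (N : nat) (j : 'I_3) (a : 'I_N) (b : 'I_2) :
  (b + 2 * (a + N * j) < 6 * N)%N.
Proof. have := ltn_ord j; have := ltn_ord a; have := ltn_ord b. nia. Qed.

Definition coord_idx (N : nat) (j : 'I_3) (a : 'I_N) (b : 'I_2) : 'I_(6 * N) :=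
  Ordinal (coord_idx_lt j a b).

Section Gaudin.
Variables (R : realType) (N : nat) (lam : 'I_N -> R).

Definition phi (x : 'rV[R]_(6 * N)) (j : 'I_3) (a : 'I_N) : R[i] :=
  Complex (x 0 (coord_idx j a 0)) (x 0 (coord_idx j a 1)).

Definition Cmat : 'M[R[i]]_3 :=
  \matrix_(i, j) (if i == j then
                    (if (i : nat) == 0%N then 1 else if (i : nat) == 1%N then -1 else 0)
                  else 0).

Definition FFstar (x : 'rV[R]_(6 * N)) (a : 'I_N) : 'M[R[i]]_3 :=
  \matrix_(i, j) (phi x i a * (phi x j a)^*).

(* A_n = sum_a lam_a^n F_a F_a^*, so that for |lam| > max |lam_a|,
   L(lam) = C + sum_{n>=0} lam^{-n-1} A_n  (geometric expansion). *)
Definition Amat (x : 'rV[R]_(6 * N)) (n : nat) : 'M[R[i]]_3 :=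
  \sum_(a < N) (((lam a ^+ n)%:C)%C *: FFstar x a).

(* L as a formal power series in t = 1/lam, truncated after t^K:
   C + sum_{n < K} t^(n+1) A_n, a matrix over {poly R[i]} (variable t = 'X). *)
Definition Ltrunc (x : 'rV[R]_(6 * N)) (K : nat) : 'M[{poly R[i]}]_3 :=
  \matrix_(i, j) ((Cmat i j)%:P + \sum_(n < K) (Amat x n i j)%:P * 'X^(n.+1)).

(* p_k(t) from det(xi I - L) = xi^3 - p1 xi^2 + p2 xi - p3, i.e.
   p_k = (-1)^k * (coefficient of xi^(3-k) in char_poly L). *)
Definition pk (x : 'rV[R]_(6 * N)) (K k : nat) : {poly R[i]} :=
  (-1) ^+ k * (char_poly (Ltrunc x K))`_(3 - k).

(* E_m^{(k)}: coefficient of lam^{-m-1} = t^(m+1) in p_k.  Truncation at K = m+1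
   terms (n = 0..m) does not affect the coefficient of t^(m+1).  The value is
   real; we take its real part to obtain an R-valued function. *)
Definition E (k m : nat) (x : 'rV[R]_(6 * N)) : R :=
  complex.Re ((pk x m.+1 k)`_m.+1).

(* Jacobian of (E_0^(1),..,E_{N-1}^(1),E_0^(2),..,E_{N-1}^(3)) w.r.t. the 6N real
   coordinates: row r <-> (k, m) = ((r %/ N).+1, r %% N). *)
Definition Ejacobian (x : 'rV[R]_(6 * N)) : 'M[R]_(3 * N, 6 * N) :=
  \matrix_(r, c) ('D_('e_c) (E ((r : nat) %/ N).+1 ((r : nat) %% N)) x).

End Gaudin.

From mathcomp Require Import all_boot all_order all_algebra.
From mathcomp Require Import complex mxtens.
From mathcomp Require Import all_classical all_reals all_analysis.
From mathcomp Require Import ring.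
Set Implicit Arguments. Unset Strict Implicit. Unset Printing Implicit Defensive.
Import Order.TTheory GRing.Theory Num.Theory.
Import numFieldNormedType.Exports.
Local Open Scope ring_scope.
Local Open Scope classical_set_scope.

(* Each E_m^(k) is the real part of a coefficient of an explicit polynomial in
   the entries of L, hence a real polynomial in the 6N coordinates, and so is
   the 3N x 3N minor Delta of the Jacobian formed by the columns of the
   Re phi_{j a}.  The set {Delta <> 0} is open, and it is dense as soon as Delta
   does not vanish identically, because a polynomial restricted to a line is a
   univariate polynomial.  At the point where every phi_{j a} equals 1, moving
   Re phi_{j0 a0} by s perturbs L by s g (u 1^T + 1 u^T) + O(s^2), where u is
   the j0-th unit vector and g = sum_n lam_{a0}^n t^(n+1); the derivative of
   E_m^(k) is then d_{k j0} lam_{a0}^m for a constant invertible 3 x 3 matrix d.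
   So Delta is nonzero there: the minor is d tensored with the Vandermonde
   matrix of the distinct lam_a. *)

Lemma exists_nonroot_near0 (R : realFieldType) (q : {poly R}) (d : R) :
  q != 0 -> 0 < d -> exists2 s, 0 < s < d & ~~ root q s.
Proof.
move=> q_neq0 d_gt0; pose s i := d / i.+2%:R.
have s_bounds i : 0 < s i < d.
  by rewrite divr_gt0 ?ltr0n //= ltr_pdivrMr ?ltr0n // ltr_pMr ?ltr1n.
suff /allPn [_ /mapP [i _ ->] nroot] : ~~ all (root q) (map s (iota 0 (size q))).
  by exists (s i).
apply: contra q_neq0 => allroot; apply/eqP; apply: (roots_geq_poly_eq0 allroot).
  rewrite map_inj_uniq ?iota_uniq // => i j /(mulfI (lt0r_neq0 d_gt0)) /invr_inj.
  by move/eqP; rewrite eqr_nat !eqSS => /eqP.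
by rewrite size_map size_iota.
Qed.

Section PolynomialFunctions.
Variables (R : realType) (n : nat).
Local Notation V := 'rV[R]_n.

Inductive polyfun : (V -> R) -> Prop :=
| polyfunC c : polyfun (fun=> c)
| polyfunX i : polyfun (fun x => x 0 i)
| polyfunD f g : polyfun f -> polyfun g -> polyfun (fun x => f x + g x)
| polyfunM f g : polyfun f -> polyfun g -> polyfun (fun x => f x * g x).

Lemma eq_polyfun f g : polyfun f -> f =1 g -> polyfun g.
Proof. by move=> pf /funext <-. Qed.

Lemma polyfunN f : polyfun f -> polyfun (fun x => - f x).
Proof.
by move=> pf; apply: eq_polyfun (polyfunM (polyfunC (-1)) pf) _ => x; rewrite mulN1r.
Qed.

Lemma polyfunB f g : polyfun f -> polyfun g -> polyfun (fun x => f x - g x).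
Proof. by move=> pf pg; apply: polyfunD pf (polyfunN pg). Qed.

Lemma polyfun_sum (I : Type) (r : seq I) (P : pred I) (F : I -> V -> R) :
  (forall i, polyfun (F i)) -> polyfun (fun x => \sum_(i <- r | P i) F i x).
Proof.
by move=> pF; rewrite -fct_sumE; elim/big_ind: _ => //; [exact: polyfunC|exact: polyfunD].
Qed.

Lemma polyfun_prod (I : Type) (r : seq I) (P : pred I) (F : I -> V -> R) :
  (forall i, polyfun (F i)) -> polyfun (fun x => \prod_(i <- r | P i) F i x).
Proof.
by move=> pF; rewrite -fct_prodE; elim/big_ind: _ => //; [exact: polyfunC|exact: polyfunM].
Qed.

Lemma polyfun_det m (A : V -> 'M[R]_m) :
  (forall i j, polyfun (fun x => A x i j)) -> polyfun (fun x => \det (A x)).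
Proof.
move=> pA; apply: polyfun_sum => s; apply: polyfunM; first exact: polyfunC.
by apply: polyfun_prod => i; apply: pA.
Qed.

Lemma polyfun_line f : polyfun f ->
  forall x v : V, exists q : {poly R}, forall s, f (s *: v + x) = q.[s].
Proof.
elim=> [c|i|g h _ IHg _ IHh|g h _ IHg _ IHh] x v.
- by exists c%:P => s; rewrite hornerC.
- exists ((x 0 i)%:P + (v 0 i)%:P * 'X) => s.
  by rewrite !mxE !hornerE addrC mulrC.
- have [p gE] := IHg x v; have [q hE] := IHh x v.
  by exists (p + q) => s; rewrite gE hE hornerD.
- have [p gE] := IHg x v; have [q hE] := IHh x v.
  by exists (p * q) => s; rewrite gE hE hornerM.
Qed.

Lemma is_derive_line_poly (f : V -> R) (x v : V) (q : {poly R}) :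
  (forall s, f (s *: v + x) = q.[s]) -> is_derive x v f q`_1.
Proof.
move=> fE; have lineE : (fun s : R => f (s *: v + x)) = horner q by apply/funext.
have df : derivable f x v by apply/derivable1P; rewrite lineE; exact: derivable_horner.
apply: DeriveDef => //; rewrite /derive.
have -> : (fun h : R => h^-1 *: (f (h *: v + x) - f x)) =
          (fun h : R => h^-1 *: (horner q (h *: 1 + 0) - horner q 0)).
  by apply/funext => h; rewrite -lineE /= scale0r add0r addr0 [h *: 1]mulr1.
by rewrite -/(derive _ _ _) derive_val horner_coef0 coef_deriv mulr1n.
Qed.

Lemma polyfun_derivable f : polyfun f -> forall x v, derivable f x v.
Proof.
move=> pf x v; have [q fE] := polyfun_line pf x v.
by have /@ex_derive := is_derive_line_poly fE.
Qed.

Lemma polyfun_derive f v : polyfun f -> polyfun (fun x => 'D_v f x).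
Proof.
elim=> [c|i|g h pg IHg ph IHh|g h pg IHg ph IHh].
- by apply: eq_polyfun (polyfunC 0) _ => x; rewrite derive_cst.
- apply: eq_polyfun (polyfunC (v 0 i)) _ => x.
  have lineE s : (s *: v + x) 0 i = ((x 0 i)%:P + (v 0 i)%:P * 'X).[s].
    by rewrite !mxE !hornerE addrC mulrC.
  rewrite (@derive_val _ _ _ _ _ _ _ (@is_derive_line_poly (fun y => y 0 i) x v _ lineE)).
  by rewrite coefD coefC coefCM coefX add0r mulr1.
- apply: eq_polyfun (polyfunD IHg IHh) _ => x.
  by rewrite (@deriveD _ _ _ g h) //; exact: polyfun_derivable.
- apply: eq_polyfun (polyfunD (polyfunM pg IHh) (polyfunM ph IHg)) _ => x.
  by rewrite (@deriveM _ _ g h) //; exact: polyfun_derivable.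
Qed.

Lemma polyfun_continuous f : polyfun f -> continuous f.
Proof.
elim=> [c|i|g h _ cg _ ch|g h _ cg _ ch] x.
- exact: cst_continuous.
- exact: coord_continuous.
- exact: cvgD (cg x) (ch x).
- exact: cvgM (cg x) (ch x).
Qed.

Lemma polyfun_neq0_open f : polyfun f -> open [set x | f x != 0].
Proof.
move=> pf; apply: (@open_comp _ _ f [set y | y != 0]); last exact: open_neq.
by move=> x _; exact: polyfun_continuous.
Qed.

(* Restricted to the line from z to y, f is a univariate polynomial that does
   not vanish at 1, hence has non-roots arbitrarily close to 0. *)
Lemma polyfun_neq0_dense f y : polyfun f -> f y != 0 -> dense [set x | f x != 0].
Proof.
move=> pf fy_neq0 O [z Oz] /(_ z Oz) /nbhs_ballP [e /= e_gt0 zeO].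
have [q fE] := polyfun_line pf z (y - z).
have q_neq0 : q != 0.
  by apply: contra_neq fy_neq0 => q0; rewrite -[y](subrK z) -[_ - _]scale1r fE q0 horner0.
have [|s /andP [s_gt0 s_lt] nroot] :=
    @exists_nonroot_near0 _ q (e / (`|y - z| + 1)) q_neq0.
  by rewrite divr_gt0 // ltr_wpDl.
exists (s *: (y - z) + z); split; last by rewrite /= fE.
apply: zeO; rewrite -ball_normE /= opprD addrCA subrr addr0 normrN normrZ gtr0_norm //.
apply: (@le_lt_trans _ _ (s * (`|y - z| + 1))); first by rewrite ler_pM2l // lerDl.
by rewrite -ltr_pdivlMr // ltr_wpDl.
Qed.

End PolynomialFunctions.

Section ComplexPolynomialFunctions.
Variables (R : realType) (n : nat).
Local Notation V := 'rV[R]_n.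

Definition cpolyfun (f : V -> R[i]) :=
  polyfun (fun x => complex.Re (f x)) /\ polyfun (fun x => complex.Im (f x)).

Lemma eq_cpolyfun f g : cpolyfun f -> f =1 g -> cpolyfun g.
Proof. by move=> pf /funext <-. Qed.

Lemma cpolyfunC c : cpolyfun (fun=> c).
Proof. by split; apply: polyfunC. Qed.

Lemma cpolyfunD f g : cpolyfun f -> cpolyfun g -> cpolyfun (fun x => f x + g x).
Proof.
move=> [pf1 pf2] [pg1 pg2].
by split; [apply: eq_polyfun (polyfunD pf1 pg1) _|apply: eq_polyfun (polyfunD pf2 pg2) _];
  move=> x; case: (f x) (g x) => [? ?] [? ?].
Qed.

Lemma cpolyfunM f g : cpolyfun f -> cpolyfun g -> cpolyfun (fun x => f x * g x).
Proof.
move=> [pf1 pf2] [pg1 pg2]; split.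
  apply: eq_polyfun (polyfunB (polyfunM pf1 pg1) (polyfunM pf2 pg2)) _ => x.
  by case: (f x) (g x) => [? ?] [? ?].
apply: eq_polyfun (polyfunD (polyfunM pf1 pg2) (polyfunM pf2 pg1)) _ => x.
by case: (f x) (g x) => [? ?] [? ?].
Qed.

Lemma cpolyfun_conj f : cpolyfun f -> cpolyfun (fun x => (f x)^*).
Proof.
move=> [pf1 pf2]; split; first by apply: eq_polyfun pf1 _ => x; case: (f x).
by apply: eq_polyfun (polyfunN pf2) _ => x; case: (f x).
Qed.

Lemma cpolyfun_sum (I : Type) (r : seq I) (P : pred I) (F : I -> V -> R[i]) :
  (forall i, cpolyfun (F i)) -> cpolyfun (fun x => \sum_(i <- r | P i) F i x).
Proof.
by move=> pF; rewrite -fct_sumE; elim/big_ind: _ => //; [exact: cpolyfunC|exact: cpolyfunD].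
Qed.

Definition coef_cpolyfun (f : V -> {poly R[i]}) := forall i, cpolyfun (fun x => (f x)`_i).

Lemma coef_cpolyfunC p : coef_cpolyfun (fun=> p).
Proof. by move=> i; apply: cpolyfunC. Qed.

Lemma coef_cpolyfun_polyC f : cpolyfun f -> coef_cpolyfun (fun x => (f x)%:P).
Proof.
move=> pf [|i]; first by apply: eq_cpolyfun pf _ => x; rewrite coefC.
by apply: eq_cpolyfun (cpolyfunC 0) _ => x; rewrite coefC.
Qed.

Lemma coef_cpolyfunD f g :
  coef_cpolyfun f -> coef_cpolyfun g -> coef_cpolyfun (fun x => f x + g x).
Proof.
by move=> pf pg i; apply: eq_cpolyfun (cpolyfunD (pf i) (pg i)) _ => x; rewrite coefD.
Qed.

Lemma coef_cpolyfunN f : coef_cpolyfun f -> coef_cpolyfun (fun x => - f x).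
Proof.
move=> pf i; apply: eq_cpolyfun (cpolyfunM (cpolyfunC (-1)) (pf i)) _ => x.
by rewrite coefN mulN1r.
Qed.

Lemma coef_cpolyfunM f g :
  coef_cpolyfun f -> coef_cpolyfun g -> coef_cpolyfun (fun x => f x * g x).
Proof.
move=> pf pg i; apply: eq_cpolyfun (_ : cpolyfun (fun x =>
  \sum_(j < i.+1) (f x)`_j * (g x)`_(i - j))) _ => [|x]; last by rewrite coefM.
by apply: cpolyfun_sum => j; apply: cpolyfunM.
Qed.

Lemma coef_cpolyfun_sum (I : Type) (r : seq I) (P : pred I) (F : I -> V -> {poly R[i]}) :
  (forall i, coef_cpolyfun (F i)) -> coef_cpolyfun (fun x => \sum_(i <- r | P i) F i x).
Proof.
move=> pF; rewrite -fct_sumE.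
by elim/big_ind: _ => //; [exact: coef_cpolyfunC|exact: coef_cpolyfunD].
Qed.

End ComplexPolynomialFunctions.

Local Notation i0 := (@Ordinal 3 0 isT).
Local Notation i1 := (@Ordinal 3 1 isT).
Local Notation i2 := (@Ordinal 3 2 isT).

Definition tr3 (S : comNzRingType) (M : 'M[S]_3) := M i0 i0 + M i1 i1 + M i2 i2.

Definition pminors3 (S : comNzRingType) (M : 'M[S]_3) :=
  (M i0 i0 * M i1 i1 - M i0 i1 * M i1 i0) + (M i0 i0 * M i2 i2 - M i0 i2 * M i2 i0)
  + (M i1 i1 * M i2 i2 - M i1 i2 * M i2 i1).

Definition det3 (S : comNzRingType) (M : 'M[S]_3) :=
  M i0 i0 * (M i1 i1 * M i2 i2 - M i1 i2 * M i2 i1)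
  - M i0 i1 * (M i1 i0 * M i2 i2 - M i1 i2 * M i2 i0)
  + M i0 i2 * (M i1 i0 * M i2 i1 - M i1 i1 * M i2 i0).

Definition char3_coef (S : comNzRingType) (k : nat) (M : 'M[S]_3) :=
  if k == 1%N then tr3 M else if k == 2%N then pminors3 M else det3 M.

Lemma det3E (S : comNzRingType) (M : 'M[S]_3) : \det M = det3 M.
Proof.
rewrite (expand_det_row _ i0) !big_ord_recl big_ord0 /cofactor.
rewrite !(expand_det_row _ ord0) !big_ord_recl !big_ord0 /cofactor !det_mx11 !mxE.
pose m (a b : nat) := M (inord a) (inord b).
have mE (a b : 'I_3) : M a b = m a b by rewrite /m !inord_val.
by rewrite /det3 !mE /=; ring.
Qed.

Lemma char_poly3 (S : comNzRingType) (M : 'M[S]_3) :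
  char_poly M = 'X^3 - (tr3 M)%:P * 'X^2 + (pminors3 M)%:P * 'X - (det3 M)%:P.
Proof.
rewrite /char_poly det3E /det3 /char_poly_mx !mxE /= /tr3 /pminors3 /det3.
by rewrite !(rmorphD, rmorphN, rmorphB, rmorphM) /= mulr1n mulr0n; ring.
Qed.

Lemma char_poly3_coef (S : comNzRingType) (M : 'M[S]_3) k : (0 < k <= 3)%N ->
  (-1) ^+ k * (char_poly M)`_(3 - k) = char3_coef k M.
Proof.
rewrite char_poly3 /char3_coef; case: k => [|[|[|[|k]]]] //= _;
  rewrite !(coefD, coefN, coefCM, coefMC, coefXn, coefX, coefC) /=; ring.
Qed.

Lemma char3_coef_map (S T : comNzRingType) (f : {rmorphism S -> T}) k (M : 'M[S]_3) :
  char3_coef k (map_mx f M) = f (char3_coef k M).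
Proof.
rewrite /char3_coef /tr3 /pminors3 /det3 !mxE.
by case: ifP => _; [|case: ifP => _]; rewrite !(rmorphD, rmorphN, rmorphM).
Qed.

Lemma coef_cpolyfun_char3_coef (R : realType) n k (A : 'rV[R]_n -> 'M[{poly R[i]}]_3) :
  (forall i j, coef_cpolyfun (fun x => A x i j)) ->
  coef_cpolyfun (fun x => char3_coef k (A x)).
Proof.
move=> pA; rewrite /char3_coef /tr3 /pminors3 /det3.
case: (k == 1%N); [|case: (k == 2%N)];
  by repeat (apply: coef_cpolyfunD || apply: coef_cpolyfunN || apply: coef_cpolyfunM).
Qed.

Section GaudinPolynomiality.
Variables (R : realType) (N : nat) (lam : 'I_N -> R).
Local Notation V := 'rV[R]_(6 * N).

Lemma cpolyfun_phi j a : cpolyfun (fun x : V => phi x j a).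
Proof. by split; apply: polyfunX. Qed.

Lemma cpolyfun_Amat n i j : cpolyfun (fun x : V => Amat lam x n i j).
Proof.
apply: eq_cpolyfun (_ : cpolyfun (fun x =>
  \sum_a ((lam a ^+ n)%:C)%C * (phi x i a * (phi x j a)^*))) _ => [|x].
  apply: cpolyfun_sum => a; apply: cpolyfunM; first exact: cpolyfunC.
  by apply: cpolyfunM; [|apply: cpolyfun_conj]; apply: cpolyfun_phi.
by rewrite /Amat summxE; apply: eq_bigr => a _; rewrite !mxE.
Qed.

Lemma coef_cpolyfun_Ltrunc K i j : coef_cpolyfun (fun x : V => Ltrunc lam x K i j).
Proof.
have -> : (fun x : V => Ltrunc lam x K i j) =
    (fun x => (Cmat R i j)%:P + \sum_(n < K) (Amat lam x n i j)%:P * 'X^(n.+1)).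
  by apply/funext => x; rewrite mxE.
apply: coef_cpolyfunD; first exact: coef_cpolyfunC.
apply: coef_cpolyfun_sum => n; apply: coef_cpolyfunM; last exact: coef_cpolyfunC.
exact/coef_cpolyfun_polyC/cpolyfun_Amat.
Qed.

Lemma pkE (x : V) K k : (0 < k <= 3)%N -> pk lam x K k = char3_coef k (Ltrunc lam x K).
Proof. exact: char_poly3_coef. Qed.

Lemma polyfun_E k m : (0 < k <= 3)%N -> polyfun (E lam k m).
Proof.
move=> k_range; have pE := coef_cpolyfun_char3_coef k (@coef_cpolyfun_Ltrunc m.+1).
by apply: eq_polyfun (pE m.+1).1 _ => x; rewrite /E pkE.
Qed.

End GaudinPolynomiality.

Lemma coord_idx_eq N (j j' : 'I_3) (a a' : 'I_N) (b b' : 'I_2) :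
  (coord_idx j a b == coord_idx j' a' b') = [&& j == j', a == a' & b == b'].
Proof.
apply/eqP/and3P => [/(congr1 val) /= /eqP|[/eqP-> /eqP-> /eqP->] //].
have swap (p q r : nat) : (p + q * r = r * q + p)%N by rewrite addnC mulnC.
rewrite !swap eq_addl_mul ?ltn_ord // xpair_eqE eq_addl_mul ?ltn_ord // xpair_eqE.
by case/andP => /andP [? ?] ?; split.
Qed.

Lemma odd_coord_idx N (j : 'I_3) (a : 'I_N) (b : 'I_2) : odd (coord_idx j a b) = odd b.
Proof. by rewrite /= oddD oddM /= addbF. Qed.

(* every phi_{j a} equals 1 here: the even coordinates are the real parts *)
Definition phi_one (R : realType) N : 'rV[R]_(6 * N) := \row_c (~~ odd c)%:R.

(* truncated expansion of 1 / (lambda - lam a) in powers of t = 1 / lambda *)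
Definition pole_series (R : realType) N (lam : 'I_N -> R) (a : 'I_N) K : {poly R[i]} :=
  \sum_(n < K) (((lam a ^+ n)%:C)%C)%:P * 'X^(n.+1).

(* Row k, column j: the coefficient of s in char3_coef k.+1 of
   C + G 11^T + s g (u_j 1^T + 1 u_j^T), divided by g; it does not depend on G
   (line_mx_char3_coef1). *)
Definition dmat (R : numFieldType) : 'M[R]_3 :=
  \matrix_(k, j) nth 0 (nth [::] [:: [:: 2; 2; 2]; [:: -2; 2; 0]; [:: 0; 0; -2]] k) j.

Lemma coef1M (S : comNzRingType) (p q : {poly S}) :
  (p * q)`_1 = p`_0 * q`_1 + p`_1 * q`_0.
Proof. by rewrite coefM !big_ord_recl big_ord0 /= addr0. Qed.

Lemma Re_coef_horner_real (R : realType) (P : {poly {poly R[i]}}) (s : R) i :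
  complex.Re ((P.[((s%:C)%C)%:P])`_i) = (\poly_(d < size P) complex.Re ((P`_d)`_i)).[s].
Proof.
rewrite horner_coef horner_poly coef_sum raddf_sum; apply: eq_bigr => d _.
rewrite -!rmorphXn coefMC; case: (P`_d`_i) => a b /=.
by rewrite mulr0 subr0.
Qed.

Lemma conj_real_complex (R : realType) (x : R) : ((x%:C)%C)^* = (x%:C)%C.
Proof. by apply/eqP; rewrite eq_complex /= oppr0 !eqxx. Qed.

Lemma coef_pole_series (R : realType) N (lam : 'I_N -> R) a m :
  (pole_series lam a m.+1)`_m.+1 = ((lam a ^+ m)%:C)%C.
Proof.
rewrite coef_sum big_ord_recr /= big1 ?add0r => [|n _].
  by rewrite coefCM coefXn eqxx mulr1.
by rewrite coefCM coefXn eqSS gtn_eqF ?mulr0.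
Qed.

Section Witness.
Variables (R : realType) (N : nat) (lam : 'I_N -> R) (j0 : 'I_3) (a0 : 'I_N).
Local Notation c0 := (coord_idx j0 a0 0).
Local Notation rc x := (((x)%:C)%C)%:P.

Let u (i : 'I_3) : R := (i == j0)%:R.

Lemma phi_line s j a :
  phi (s *: 'e_c0 + phi_one R N) j a = ((1 + s * (u j * (a == a0)%:R))%:C)%C.
Proof.
rewrite /phi !mxE !odd_coord_idx !coord_idx_eq (_ : (1 == 0 :> 'I_2) = false) //.
by rewrite eqxx !andbT !andbF /= mulr0 addr0 addrC /u -natrM mulnb.
Qed.

Lemma Amat_line s n i k : Amat lam (s *: 'e_c0 + phi_one R N) n i k =
  ((\sum_b lam b ^+ n + lam a0 ^+ n * (s * (u i + u k) + s ^+ 2 * (u i * u k)))%:C)%C.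
Proof.
rewrite /Amat summxE.
under eq_bigr => b _.
  rewrite !mxE !phi_line conj_real_complex -!(rmorphM (real_complex R)).
  have -> : lam b ^+ n * ((1 + s * (u i * (b == a0)%:R)) * (1 + s * (u k * (b == a0)%:R)))
      = lam b ^+ n + (b == a0)%:R * (lam b ^+ n * (s * (u i + u k) + s ^+ 2 * (u i * u k))).
    by case: (b == a0); rewrite /= ?mulr1n ?mulr0n; ring.
  over.
rewrite -rmorph_sum big_split /=; congr ((_ + _)%:C)%C.
by rewrite (bigD1 a0) //= eqxx mul1r big1 ?addr0 // => b /negbTE ->; rewrite mul0r.
Qed.

Definition line_mx K : 'M[{poly {poly R[i]}}]_3 := \matrix_(i, k)
  (((Cmat R i k)%:P + \sum_b pole_series lam b K)%:P
   + (rc (u i + u k) * pole_series lam a0 K)%:P * 'X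
   + (rc (u i * u k) * pole_series lam a0 K)%:P * 'X^2).

Lemma Ltrunc_line_entry s K i k : Ltrunc lam (s *: 'e_c0 + phi_one R N) K i k =
  (Cmat R i k)%:P + \sum_b pole_series lam b K
  + rc (s * (u i + u k) + s ^+ 2 * (u i * u k)) * pole_series lam a0 K.
Proof.
rewrite mxE -addrA; congr (_ + _).
under eq_bigr do rewrite Amat_line !rmorphD mulrDl.
rewrite big_split /=; congr (_ + _).
  rewrite /pole_series exchange_big /=; apply: eq_bigr => n _.
  by rewrite !rmorph_sum mulr_suml.
rewrite mulr_sumr; apply: eq_bigr => n _.
by rewrite [RHS]mulrA -!rmorphM [_ * lam a0 ^+ n]mulrC.
Qed.

Lemma Ltrunc_line s K :
  Ltrunc lam (s *: 'e_c0 + phi_one R N) K = map_mx (horner_eval (rc s)) (line_mx K).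
Proof.
apply/matrixP => i k; rewrite Ltrunc_line_entry !mxE /horner_eval.
rewrite !(hornerD, hornerM, hornerC, hornerX, hornerXn).
by rewrite !(rmorphD, rmorphM, rmorphXn) /=; ring.
Qed.

Lemma derive_E_phi_one k m : (0 < k <= 3)%N ->
  'D_('e_c0) (E lam k m) (phi_one R N) =
  complex.Re (((char3_coef k (line_mx m.+1))`_1)`_m.+1).
Proof.
move=> k_range; set P := char3_coef k (line_mx m.+1).
have E_line s : E lam k m (s *: 'e_c0 + phi_one R N) =
    (\poly_(d < size P) complex.Re ((P`_d)`_m.+1)).[s].
  by rewrite /E pkE // Ltrunc_line char3_coef_map Re_coef_horner_real.
rewrite (@derive_val _ _ _ _ _ _ _ (is_derive_line_poly E_line)) coef_poly.
by case: ltnP => // /(nth_default 0) ->; rewrite coef0.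
Qed.

Lemma line_mx_char3_coef1 (k : 'I_3) K :
  (char3_coef k.+1 (line_mx K))`_1 = rc (dmat R k j0) * pole_series lam a0 K.
Proof.
have coef0E i l : (line_mx K i l)`_0 = (Cmat R i l)%:P + \sum_b pole_series lam b K.
  by rewrite mxE !coefD coefC coefMX coefMXn /= !addr0.
have coef1E i l : (line_mx K i l)`_1 = rc (u i + u l) * pole_series lam a0 K.
  by rewrite mxE !coefD coefC coefMX coefMXn /= coefC add0r addr0.
have j0E : j0 = i0 \/ j0 = i1 \/ j0 = i2.
  by case: j0 => [[|[|[|//]]]] /= ?; [left|right; left|right; right]; apply: val_inj.
case: k => [[|[|[|//]]] kP]; rewrite /char3_coef /= /tr3 /pminors3 /det3;
  rewrite !(coefD, coefN, coef1M, coef0M) ?coef0E ?coef1E /dmat /u !mxE /=;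
  case: j0E => [->|[->|->]] /=;
  rewrite ?(rmorphD, rmorphN, rmorphM, rmorph1, rmorph0) /=; ring.
Qed.

Lemma derive_E_phi_one_dmat (k : 'I_3) m :
  'D_('e_c0) (E lam k.+1 m) (phi_one R N) = dmat R k j0 * lam a0 ^+ m.
Proof.
rewrite (@derive_E_phi_one k.+1 m (ltn_ord k)) line_mx_char3_coef1.
by rewrite coefCM coef_pole_series -rmorphM.
Qed.

End Witness.

Lemma dmat_unit (R : numFieldType) : dmat R \in unitmx.
Proof.
have det_dmat : det3 (dmat R) = - 16%:R by rewrite /det3 !mxE /=; ring.
by rewrite unitmxE det3E det_dmat unitfE oppr_eq0 pnatr_eq0.
Qed.

Lemma Vandermonde_unit (F : fieldType) n (a : 'rV[F]_n) :
  injective (a 0) -> Vandermonde n a \in unitmx.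
Proof.
move=> a_inj; rewrite unitmxE det_Vandermonde unitfE.
apply/prodf_neq0 => i _; apply/prodf_neq0 => j ij; rewrite subr_eq0.
by apply: contraTneq ij => /a_inj ->; rewrite ltnn.
Qed.

Lemma mxrank_unit_colsub (F : fieldType) m n (A : 'M[F]_(m, n)) (f : 'I_m -> 'I_n) :
  colsub f A \in unitmx -> \rank A = m.
Proof.
move=> fA_unit; apply/eqP; rewrite eqn_leq rank_leq_row -{1}(mxrank_unit fA_unit).
have -> : colsub f A = A *m colsub f 1 by rewrite mulmx_colsub mulmx1.
exact: mxrankM_maxl.
Qed.

Section JacobianMinor.
Variables (R : realType) (N : nat) (lam : 'I_N -> R).

Definition re_col (c : 'I_(3 * N)) : 'I_(6 * N) :=
  coord_idx (mxtens_unindex c).1 (mxtens_unindex c).2 0.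

Definition Ejacobian_minor (x : 'rV[R]_(6 * N)) : 'M[R]_(3 * N) :=
  colsub re_col (Ejacobian lam x).

Lemma polyfun_det_Ejacobian_minor : polyfun (fun x => \det (Ejacobian_minor x)).
Proof.
apply: polyfun_det => r c.
have -> : (fun x => Ejacobian_minor x r c) = 'D_('e_(re_col c)) (E lam (r %/ N).+1 (r %% N)).
  by apply/funext => x; rewrite !mxE.
exact/polyfun_derive/polyfun_E/(mxtens_index_proof1 r).
Qed.

Lemma Ejacobian_minor_phi_one :
  Ejacobian_minor (phi_one R N) = dmat R *t Vandermonde N (\row_a lam a).
Proof.
apply/matrixP => r c; rewrite -[r]mxtens_unindexK -[c]mxtens_unindexK.
move: (mxtens_unindex r) (mxtens_unindex c) => [k m] [j a].
rewrite tensmxE !mxE /re_col !mxtens_indexK /=.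
have [-> ->] : (mxtens_index (k, m) %/ N = k /\ mxtens_index (k, m) %% N = m)%N.
  by have /(congr1 (fun p => (val p.1, val p.2))) [] := mxtens_indexK (k, m).
by rewrite derive_E_phi_one_dmat mxE.
Qed.

Lemma det_Ejacobian_minor_phi_one_neq0 :
  N != 0%N -> injective lam -> \det (Ejacobian_minor (phi_one R N)) != 0.
Proof.
move=> N_neq0 lam_inj; rewrite -unitfE -unitmxE Ejacobian_minor_phi_one.
apply: tensmx_unit => //; first exact: dmat_unit.
by apply: Vandermonde_unit => a b; rewrite !mxE => /lam_inj.
Qed.

End JacobianMinor.

Unset Implicit Arguments.
Set Strict Implicit.

Theorem lemma5 (R : realType) (N : nat) (lam : 'I_N -> R)
  (hN : (0 < N)%N) (hinj : injective lam) (hnz : forall a, lam a != 0) :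
  exists U : set 'rV[R]_(6 * N),
    open U /\ dense U /\
    forall x, U x -> \rank (Ejacobian lam x) = (3 * N)%N.
Proof.
have N_neq0 : N != 0%N by rewrite -lt0n.
exists [set x | \det (Ejacobian_minor lam x) != 0]; split; [|split].
- exact: polyfun_neq0_open (polyfun_det_Ejacobian_minor lam).
- exact: polyfun_neq0_dense (polyfun_det_Ejacobian_minor lam)
    (det_Ejacobian_minor_phi_one_neq0 N_neq0 hinj).
- move=> x /= det_neq0; apply: (mxrank_unit_colsub (f := @re_col N)).
  by rewrite unitmxE unitfE.
Qed.
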